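(* Let $p$ be a prime, let $B$ be a nontrivial finite $p$-group and let $r\ge2$ be an integer. Then there are sequences $(G_n)$, $(H_n)$ of finite $p$-groups with $|G_n|\to\infty$, $|H_n|\to\infty$ and $a(G_n\wr H_n)\to p^r a(B)$.
   Context: For a finite group $G$, the average order is $a(G)=\frac{1}{|G|}\sum_{g\in G}\mathrm{order}(g)$. For groups $A,B$, let $K=\prod_{b\in B}A$, on which $B$ acts by $x\cdot(\alpha_b)_b=(\alpha_{x^{-1}b})_b$ for $x\in B$; the wreath product $A\wr B$ is the semidirect product $K\rtimes B$ for this action. *)

From HB Require Import structures.
From mathcomp Require Import all_boot all_order all_algebra all_fingroup all_solvable.
Set Implicit Arguments. Unset Strict Implicit. Unset Printing Implicit Defensive.
Import GRing.Theory Num.Theory.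

(* Wreath product A wr B = K ⋊ B, K = {ffun B -> A}, with the action
   (x . alpha)_b = alpha_(x^-1 b); hence
   (f1, b1) * (f2, b2) = (fun c => f1 c * f2 (b1^-1 * c), b1 * b2). *)
Definition wreath (aT bT : finGroupType) : Type := ({ffun bT -> aT} * bT)%type.
HB.instance Definition _ (aT bT : finGroupType) := Finite.on (wreath aT bT).

Section Wreath.
Variables aT bT : finGroupType.
Local Open Scope group_scope.
Implicit Types u v w : wreath aT bT.

Definition wr_mul u v : wreath aT bT :=
  ([ffun c => u.1 c * v.1 (u.2^-1 * c)], u.2 * v.2).
Definition wr_one : wreath aT bT := ([ffun => 1], 1).
Definition wr_inv u : wreath aT bT :=
  ([ffun c => (u.1 (u.2 * c))^-1], u.2^-1).

Lemma wr_mulA : associative wr_mul.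
Proof.
move=> [f1 b1] [f2 b2] [f3 b3]; rewrite /wr_mul /=; congr (_, _).
  by apply/ffunP=> c; rewrite !ffunE /= invMg -!mulgA.
by rewrite mulgA.
Qed.

Lemma wr_mul1 : left_id wr_one wr_mul.
Proof.
move=> [f b]; rewrite /wr_mul /=; congr (_, _); last by rewrite mul1g.
by apply/ffunP=> c; rewrite !ffunE invg1 !mul1g.
Qed.

Lemma wr_mulV : left_inverse wr_one wr_inv wr_mul.
Proof.
move=> [f b]; rewrite /wr_mul /wr_one /=; congr (_, _); last by rewrite mulVg.
by apply/ffunP=> c; rewrite !ffunE /= invgK mulVg.
Qed.

HB.instance Definition _ :=
  Finite_isGroup.Build (wreath aT bT) wr_mulA wr_mul1 wr_mulV.
End Wreath.

Notation "A \wr B" := (wreath A B) (at level 40, left associativity).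

Definition avg_order (gT : finGroupType) (A : {set gT}) : rat :=
  (((\sum_(x in A) #[x]%g)%N)%:R / (#|A|)%:R)%R.

Definition converges_to (u : nat -> rat) (l : rat) : Prop :=
  forall eps : rat, (0 < eps)%R -> exists N : nat, forall n, (N <= n)%N -> (`|u n - l| < eps)%R.

Definition tends_to_infty (u : nat -> nat) : Prop :=
  forall M : nat, exists N : nat, forall n, (N <= n)%N -> (M <= u n)%N.

(* An element (f, h) of X \wr Y, with X of prime exponent p, has order #[h] * p
   unless the product of the values of f along the <[h]>-orbit of 1 is trivial,
   which happens for exactly a fraction 1/|X| of the f.  Hence
   p (1 - 1/|X|) a(Y) <= a(X \wr Y) <= p a(Y).  Iterating r times from Y = B
   with X = F_p^n squeezes the average order of X \wr (X \wr ... \wr B) between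
   p^r a(B) (1 - r/p^n) and p^r a(B); take G_n = F_p^n and H_n the (r-1)-fold
   iterate. *)

From mathcomp Require Import all_boot all_order all_algebra all_fingroup all_solvable.
From mathcomp Require Import ring lra.
Import GRing.Theory Num.Theory Order.TTheory.
Set Implicit Arguments. Unset Strict Implicit. Unset Printing Implicit Defensive.

Lemma cardT_gt0 (gT : finGroupType) : (0 < #|gT|)%N.
Proof. by rewrite (cardD1 1%g). Qed.

Section PinnedFunctions.
Variables (aT : finType) (gT : finGroupType) (a : aT).

Lemma card_ffun_pinned (b : gT) :
  #|[set f : {ffun aT -> gT} | f a == b]| * #|gT| = #|gT| ^ #|aT|.
Proof.
pose F x : pred gT := if x == a then pred1 b else predT.
have -> : [set f : {ffun aT -> gT} | f a == b] = [set f in family F].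
  apply/setP=> f; rewrite !inE; apply/eqP/familyP => [fa x | /(_ a)].
    by rewrite /F; case: eqP => [->|]; rewrite ?fa ?inE.
  by rewrite /F eqxx inE => /eqP.
rewrite cardsE card_family foldrE big_map big_enum /= (bigD1 a) //= /F eqxx card1.
rewrite mul1n (eq_bigr (fun=> #|gT|)) => [|x /negbTE ->]; last by rewrite cardT.
by rewrite prod_nat_const cardC1 -expnSr prednK // (cardD1 a).
Qed.

Variable R : {ffun aT -> gT} -> gT.
Hypothesis R_off_a :
  forall f f' : {ffun aT -> gT}, {in predC1 a, f =1 f'} -> R f = R f'.

(* Overwriting f a with f a * R f is a bijection, mapping this set onto a pinned one. *)
Lemma card_pinned_mul_eq1 :
  #|[set f : {ffun aT -> gT} | (f a * R f == 1)%g]| * #|gT| = #|gT| ^ #|aT|.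
Proof.
pose phi (f : {ffun aT -> gT}) : {ffun aT -> gT} :=
  [ffun x => if x == a then (f a * R f)%g else f x].
have phiE f : {in predC1 a, phi f =1 f} by move=> x /negbTE xa; rewrite ffunE xa.
have phi_inj : injective phi.
  move=> f f' eq_phi; have eqR : R f = R f'.
    by apply: R_off_a => x xa; rewrite -phiE // eq_phi phiE.
  apply/ffunP => x; case: (eqVneq x a) => [->|xa]; last first.
    by rewrite -phiE ?inE // eq_phi phiE.
  by apply: (mulIg (R f)); move/ffunP/(_ a): eq_phi; rewrite !ffunE eqxx eqR.
have -> : [set f : {ffun aT -> gT} | (f a * R f == 1)%g]
          = phi @^-1: [set u : {ffun aT -> gT} | u a == 1%g].
  by apply/setP => f; rewrite !inE ffunE eqxx.
by rewrite card_preimset // card_ffun_pinned.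
Qed.
End PinnedFunctions.

Section WreathOrder.
Variables X Y : finGroupType.
Local Open Scope group_scope.
Implicit Types (f : {ffun Y -> X}) (h : Y).

Lemma card_wreath : #|[set: X \wr Y]| = (#|X| ^ #|Y| * #|Y|)%N.
Proof. by rewrite cardsT card_prod card_ffun. Qed.

Lemma sum_wreath (F : X \wr Y -> nat) :
  (\sum_(w in [set: X \wr Y]) F w = \sum_(h in [set: Y]) \sum_f F (f, h))%N.
Proof.
rewrite (eq_bigl predT) => [|w]; last exact: in_setT.
rewrite [RHS](eq_bigl predT) => [|h]; last exact: in_setT.
rewrite (eq_bigr (fun w => F (w.1, w.2))) => [|[] //].
by rewrite -(pair_bigA _ (fun f h => F (f, h))) exchange_big.
Qed.

Lemma wreath_mulE f1 h1 f2 h2 :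
  ((f1, h1) : X \wr Y) * (f2, h2) = ([ffun c => f1 c * f2 (h1^-1 * c)], h1 * h2).
Proof. by []. Qed.

Lemma wreath_expgE f h k :
  ((f, h) : X \wr Y) ^+ k = ([ffun c => \prod_(i < k) f (h ^- i * c)], h ^+ k).
Proof.
elim: k => [|k IHk]; first by congr (_, _); apply/ffunP=> c; rewrite !ffunE big_ord0.
rewrite expgSr IHk wreath_mulE; congr (_, _); last exact: esym (expgSr _ _).
by apply/ffunP=> c; rewrite !ffunE big_ord_recr.
Qed.

Lemma wreath_base_expgE f k : ((f, 1) : X \wr Y) ^+ k = ([ffun c => f c ^+ k], 1).
Proof.
rewrite wreath_expgE expg1n; congr (_, _); apply/ffunP=> c; rewrite !ffunE.
under eq_bigr do rewrite expg1n invg1 mul1g.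
by rewrite big_const_ord iter_mulg_1.
Qed.

Lemma wreath_expg_order f h :
  ((f, h) : X \wr Y) ^+ #[h] = ([ffun c => \prod_(i < #[h]) f (h ^- i * c)], 1).
Proof. by rewrite wreath_expgE expg_order. Qed.

Lemma order_wreath f h :
  #[(f, h) : X \wr Y] = (#[h] * #[((f, h) : X \wr Y) ^+ #[h]])%N.
Proof.
set w := (f, h) : X \wr Y.
have dvd_hw : #[h] %| #[w].
  by rewrite order_dvdn; have := congr1 snd (expg_order w); rewrite wreath_expgE => /= ->.
by rewrite orderXdiv // mulnC divnK.
Qed.

Definition wreath_cycle_prod h f : X := \prod_(i < #[h]) f (h ^- i).

Lemma card_wreath_cycle_prod_eq1 h :
  (#|[set f | (wreath_cycle_prod h f == 1)%g]| * #|X| = #|X| ^ #|Y|)%N.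
Proof.
pose R (f : {ffun Y -> X}) := \prod_(1 <= i < #[h]) f (h ^- i).
have R_off f f' : {in predC1 1, f =1 f'} -> R f = R f'.
  move=> eq_ff'; apply: eq_big_nat => i /andP[i_gt0 i_lt_h]; apply: eq_ff'.
  by rewrite inE invg_eq1 -order_dvdn gtnNdvd.
rewrite -(card_pinned_mul_eq1 R_off); congr (_ * _)%N; congr #|pred_of_set _|.
apply/setP=> f; rewrite !inE /wreath_cycle_prod.
by rewrite -(big_mkord xpredT (fun i => f (h ^- i))) (big_ltn (order_gt0 h)) expg0 invg1.
Qed.

Variable p : nat.
Hypothesis p_pr : prime p.
Hypothesis expX : forall x : X, x ^+ p = 1.

Lemma order_wreath_dvd f h : #[(f, h) : X \wr Y] %| #[h] * p.
Proof.
rewrite order_wreath dvdn_pmul2l ?order_gt0 // order_dvdn.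
rewrite wreath_expg_order wreath_base_expgE; apply/eqP; congr (_, _).
by apply/ffunP=> c; rewrite !ffunE expX.
Qed.

Lemma order_wreath_prime f h :
  wreath_cycle_prod h f != 1 -> #[(f, h) : X \wr Y] = (#[h] * p)%N.
Proof.
move=> nt_prod; rewrite order_wreath wreath_expg_order; congr (_ * _)%N.
apply: nt_prime_order => //.
  by rewrite wreath_base_expgE; congr (_, _); apply/ffunP=> c; rewrite !ffunE expX.
apply: contra nt_prod => /eqP[/ffunP/(_ 1)]; rewrite !ffunE => /eqP.
by under eq_bigr do rewrite mulg1.
Qed.

Lemma sum_order_wreath_fiber_le h :
  (\sum_f #[(f, h) : X \wr Y] <= #|X| ^ #|Y| * (#[h] * p))%N.
Proof.
rewrite -card_ffun -sum_nat_const; apply: leq_sum => f _.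
by apply/dvdn_leq/order_wreath_dvd; rewrite muln_gt0 order_gt0 prime_gt0.
Qed.

Lemma sum_order_wreath_fiber_ge h :
  ((#|X| - 1) * #|X| ^ #|Y| * (#[h] * p) <= #|X| * \sum_f #[(f, h) : X \wr Y])%N.
Proof.
set bad := [set f | wreath_cycle_prod h f == 1].
have card_good : (#|~: bad| * #|X| = (#|X| - 1) * #|X| ^ #|Y|)%N.
  have := card_wreath_cycle_prod_eq1 h; rewrite -card_ffun -(cardsC bad) -/bad => card_bad.
  by rewrite mulnBl mul1n mulnDr -card_bad [(#|X| * _)%N]mulnC addKn mulnC.
rewrite -card_good mulnAC [X in _ <= X]mulnC leq_mul2r; apply/orP; right.
rewrite [X in _ <= X](bigID (mem (~: bad))) /= -sum_nat_const.
apply: leq_trans (leq_addr _ _); apply: leq_sum => f.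
by rewrite !inE => /order_wreath_prime ->.
Qed.
End WreathOrder.

Lemma avg_order_ge0 (gT : finGroupType) (A : {set gT}) : (0 <= avg_order A)%R.
Proof. by rewrite divr_ge0 ?ler0n. Qed.

Section WreathAverageOrder.
Variables (X Y : finGroupType) (p : nat).
Hypothesis p_pr : prime p.
Hypothesis expX : forall x : X, (x ^+ p)%g = 1%g.
Local Open Scope ring_scope.

Let card_wreath_gt0 : (0 < #|X| ^ #|Y| * #|Y|)%N.
Proof. by rewrite muln_gt0 expn_gt0 !cardT_gt0. Qed.

Lemma avg_order_wreath_le : avg_order [set: X \wr Y] <= p%:R * avg_order [set: Y].
Proof.
rewrite /avg_order card_wreath sum_wreath cardsT ler_pdivrMr ?ltr0n //.
set S := (\sum_(h in _) _)%N; set T := (\sum_(h in _) _)%N.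
have sum_le : (S <= #|X| ^ #|Y| * p * T)%N.
  rewrite /S -mulnA !big_distrr /=; apply: leq_sum => h _.
  by rewrite [(p * _)%N]mulnC sum_order_wreath_fiber_le.
have -> : p%:R * (T%:R / #|Y|%:R) * (#|X| ^ #|Y| * #|Y|)%:R
          = (#|X| ^ #|Y| * p * T)%N%:R :> rat.
  by rewrite !natrM; field; rewrite pnatr_eq0 -lt0n cardT_gt0.
by rewrite ler_nat.
Qed.

Lemma avg_order_wreath_ge :
  p%:R * (1 - #|X|%:R^-1) * avg_order [set: Y] <= avg_order [set: X \wr Y].
Proof.
rewrite /avg_order card_wreath sum_wreath cardsT ler_pdivlMr ?ltr0n //.
set T := (\sum_(h in _) _)%N; set S := (\sum_(h in _) _)%N.
have sum_ge : ((#|X| - 1) * #|X| ^ #|Y| * p * T <= #|X| * S)%N.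
  rewrite /S -mulnA !big_distrr /=; apply: leq_sum => h _.
  by rewrite [(p * _)%N]mulnC sum_order_wreath_fiber_ge.
have -> : p%:R * (1 - #|X|%:R^-1) * (T%:R / #|Y|%:R) * (#|X| ^ #|Y| * #|Y|)%:R
          = ((#|X| - 1) * #|X| ^ #|Y| * p * T)%N%:R / #|X|%:R :> rat.
  by rewrite !natrM natrB ?cardT_gt0 //; field; rewrite !pnatr_eq0 -!lt0n !cardT_gt0.
by rewrite ler_pdivrMr ?ltr0n ?cardT_gt0 // mulrC -natrM ler_nat.
Qed.
End WreathAverageOrder.

Lemma bernoulli_ineq (R : realDomainType) (x : R) (k : nat) :
  (0 <= x <= 1 -> 1 - k%:R * x <= (1 - x) ^+ k)%R.
Proof.
case/andP=> x_ge0 x_le1; elim: k => [|k IHk]; first by rewrite mul0r subr0 expr0.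
rewrite exprSr (le_trans _ (ler_wpM2r _ IHk)) ?subr_ge0 //.
have kx2_ge0 : (0 <= k%:R * x * x :> R)%R by rewrite !mulr_ge0.
by rewrite -natr1; nra.
Qed.

Fixpoint iter_wreath (X Y : finGroupType) (k : nat) : finGroupType :=
  if k is k'.+1 then X \wr iter_wreath X Y k' else Y.

Lemma card_wreath_ge (X Y : finGroupType) : (#|[set: X]| <= #|[set: X \wr Y]|)%N.
Proof.
rewrite card_wreath cardsT (leq_trans _ (leq_pmulr _ (cardT_gt0 Y))) //.
by rewrite -{1}(expn1 #|X|) leq_pexp2l ?cardT_gt0.
Qed.

Lemma pgroup_wreath (X Y : finGroupType) (p : nat) :
  (p.-group [set: X] -> p.-group [set: Y] -> p.-group [set: X \wr Y])%g.
Proof. by rewrite /pgroup card_wreath !cardsT pnatM pnatX => -> ->. Qed.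

Lemma pgroup_iter_wreath (X Y : finGroupType) (p k : nat) :
  (p.-group [set: X] -> p.-group [set: Y] -> p.-group [set: iter_wreath X Y k])%g.
Proof. by move=> pX pY; elim: k => //= k; apply: pgroup_wreath. Qed.

Section IteratedWreath.
Variables (X Y : finGroupType) (p : nat).
Hypothesis p_pr : prime p.
Hypothesis expX : forall x : X, (x ^+ p)%g = 1%g.
Local Open Scope ring_scope.
Local Notation W k := [set: iter_wreath X Y k].

Let inv_card_le1 : #|X|%:R^-1 <= 1 :> rat.
Proof. by rewrite invf_le1 ?ler1n ?ltr0n cardT_gt0. Qed.

Lemma avg_order_iter_wreath_exp k :
  (p%:R * (1 - #|X|%:R^-1)) ^+ k * avg_order [set: Y] <= avg_order (W k)
  <= p%:R ^+ k * avg_order [set: Y].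
Proof.
have c_ge0 : 0 <= p%:R * (1 - #|X|%:R^-1) :> rat by rewrite mulr_ge0 ?subr_ge0.
elim: k => [|k /andP[lo hi]]; first by rewrite !expr0 !mul1r lexx.
apply/andP; split.
  rewrite exprS -mulrA (le_trans (ler_wpM2l c_ge0 lo)) //.
  exact: avg_order_wreath_ge.
rewrite exprS -mulrA (le_trans (avg_order_wreath_le _ p_pr expX)) //.
by rewrite ler_wpM2l.
Qed.

Lemma avg_order_iter_wreath k :
  (p ^ k)%:R * avg_order [set: Y] * (1 - k%:R / #|X|%:R) <= avg_order (W k)
  <= (p ^ k)%:R * avg_order [set: Y].
Proof.
case/andP: (avg_order_iter_wreath_exp k) => lo hi; rewrite natrX hi andbT.
apply: le_trans lo; rewrite exprMn mulrAC ler_wpM2r ?avg_order_ge0 //.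
by rewrite ler_wpM2l ?exprn_ge0 ?ler0n // bernoulli_ineq // invr_ge0 ler0n.
Qed.
End IteratedWreath.

Section SubgroupAsType.
Variables (gT : finGroupType) (G : {group gT}).

Lemma card_subg : #|[set: subg_of G]| = #|G|.
Proof. exact: isom_card (isom_sgval G). Qed.

Lemma avg_order_subg : avg_order [set: subg_of G] = avg_order G.
Proof.
rewrite /avg_order card_subg -{2}(im_sgval G) morphimEsub // big_imset /=.
  by congr (_%:R / _)%R; apply: eq_bigr => x _; rewrite order_injm ?injm_sgval.
by move=> x y _ _; apply: val_inj.
Qed.
End SubgroupAsType.

Definition abelem (p n : nat) : finGroupType := 'rV['F_p]_n.

Section ElementaryAbelian.
Variables (p n : nat).
Hypothesis p_pr : prime p.

Lemma expg_abelem (x : abelem p n) : (x ^+ p)%g = 1%g.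
Proof. by rewrite FinRing.zmodXgE -scaler_nat pchar_Fp_0 // scale0r. Qed.

Lemma card_abelem : #|[set: abelem p n]| = (p ^ n)%N.
Proof. by rewrite cardsT card_mx card_Fp // mul1n. Qed.

Lemma pgroup_abelem : (p.-group [set: abelem p n])%g.
Proof. by rewrite /pgroup card_abelem pnatX pnat_id. Qed.
End ElementaryAbelian.

Lemma tends_to_infty_ge_id (u : nat -> nat) : (forall n, n <= u n)%N -> tends_to_infty u.
Proof. by move=> u_ge M; exists M => n le_Mn; apply: leq_trans le_Mn (u_ge n). Qed.

Lemma converges_to_squeeze (u : nat -> rat) (l c : rat) (e : nat -> nat) :
  (forall n, n < e n)%N -> (forall n, l - c / (e n)%:R <= u n <= l)%R ->
  converges_to u l.
Proof.
move=> e_gt bounds eps eps_gt0; exists (Num.bound (`|c| / eps)) => n le_bound_n.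
have /andP[lo hi] := bounds n.
have e_gt0 : (0 < (e n)%:R :> rat)%R by rewrite ltr0n (leq_ltn_trans _ (e_gt n)).
have c_lt : (`|c| < eps * (e n)%:R)%R.
  rewrite mulrC -ltr_pdivrMr //; apply: lt_le_trans (archi_boundP _) _.
    by rewrite divr_ge0 // ltW.
  by rewrite ler_nat (leq_trans le_bound_n (ltnW (e_gt n))).
rewrite ler0_norm ?subr_le0 // opprB (@le_lt_trans _ _ (`|c| / (e n)%:R)%R) //.
  rewrite lerBlDr -lerBlDl (le_trans _ lo) // lerD2l lerN2.
  by rewrite ler_wpM2r ?invr_ge0 ?ler0n ?ler_norm.
by rewrite ltr_pdivrMr.
Qed.


Theorem corollary7p1 (p : nat) (bT : finGroupType) (B : {group bT}) (r : nat) :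
  prime p -> (p.-group B)%g -> (B :!=: 1)%g -> (2 <= r)%N ->
  exists (gT hT : nat -> finGroupType),
    [/\ forall n, (p.-group [set: gT n])%g,
        forall n, (p.-group [set: hT n])%g,
        tends_to_infty (fun n => #|[set: gT n]|),
        tends_to_infty (fun n => #|[set: hT n]|) &
        converges_to (fun n => avg_order [set: gT n \wr hT n])
                     ((p ^ r)%:R * avg_order B)%R].
Proof.
move=> p_pr pB _; case: r => // k k_gt0.
have p_gt_id n : (n < p ^ n)%N by rewrite ltn_expl ?prime_gt1.
have pB_type : (p.-group [set: subg_of B])%g by rewrite /pgroup card_subg.
exists (abelem p), (fun n => iter_wreath (abelem p n) (subg_of B) k); split.
- by move=> n; apply: pgroup_abelem.
- by move=> n; apply: pgroup_iter_wreath (pgroup_abelem _ p_pr) pB_type.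
- by apply: tends_to_infty_ge_id => n; rewrite card_abelem // ltnW.
- apply: tends_to_infty_ge_id => n; case: k k_gt0 => // k _.
  by rewrite (leq_trans _ (card_wreath_ge _ _)) // card_abelem // ltnW.
set L := ((p ^ k.+1)%:R * avg_order B)%R.
apply: (converges_to_squeeze (c := (L * k.+1%:R)%R) (e := fun n => p ^ n)) => // n.
have := avg_order_iter_wreath (subg_of B) p_pr (@expg_abelem p n p_pr) k.+1.
by rewrite -cardsT card_abelem // avg_order_subg -/L mulrBr mulr1 (mulrA L).
Qed.
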